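(* Let $d>0$, let $\mathcal{S}$ be the 4-PAM constellation labeled by any Gray labeling, and let $\mathcal{B}\subset\{0,1\}^{2N}$ be a binary linear code with at least two codewords that contains codewords $\boldsymbol{b}'',\boldsymbol{b}'''$ such that $b''_1[k]=1$ for all $k$ and $b'''_2[k]=1$ for all $k$. Then $\mathsf{L}(\mathcal{B})=0$.
   Context: $\mathcal{S}=\{s_1,s_2,s_3,s_4\}$ with $s_1=-3d$, $s_2=-d$, $s_3=d$, $s_4=3d$. A labeling is a bijection $\Phi_{\mathcal{S}}:\{0,1\}^2\to\mathcal{S}$, described by $\boldsymbol{q}=[q_1,\dots,q_4]$ where $q_i$ is the integer whose two-bit representation $[b_1,b_2]$ (most significant bit first) is $\Phi_{\mathcal{S}}^{-1}(s_i)$; the Gray labelings are $[0,1,3,2]$, $[0,2,3,1]$, $[1,0,2,3]$, $[2,0,1,3]$. A codeword of $\mathcal{B}$ is written $\boldsymbol{b}=[\boldsymbol{b}[1],\dots,\boldsymbol{b}[N]]$ with $\boldsymbol{b}[k]=[b_1[k],b_2[k]]$, and the CM code is $\mathcal{X}=\{[\Phi_{\mathcal{S}}(\boldsymbol{b}[1]),\dots,\Phi_{\mathcal{S}}(\boldsymbol{b}[N])]:\boldsymbol{b}\in\mathcal{B}\}$. For $\boldsymbol{x},\hat{\boldsymbol{x}}\in\mathcal{S}^N$ and each $k$ with $x[k]\neq\hat{x}[k]$: $\mu^{\mathcal{X}}_k=\sigma^{2,\mathcal{X}}_k=(x[k]-\hat{x}[k])^2/(4d^2)$; $\mu^{\mathcal{B}}_k=\sigma^{2,\mathcal{B}}_k=(x[k]-\hat{x}[k])^2/(4d^2)$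 except that if $\{x[k],\hat{x}[k]\}=\{s_1,s_4\}$ then $\mu^{\mathcal{B}}_k=3$, $\sigma^{2,\mathcal{B}}_k=1$. Summing over $k$ with $x[k]\neq\hat{x}[k]$, $a^{\mathcal{X}}(\boldsymbol{x},\hat{\boldsymbol{x}})=\sum_k\mu^{\mathcal{X}}_k/\sqrt{\sum_k\sigma^{2,\mathcal{X}}_k}$ and $a^{\mathcal{B}}(\boldsymbol{x},\hat{\boldsymbol{x}})=\sum_k\mu^{\mathcal{B}}_k/\sqrt{\sum_k\sigma^{2,\mathcal{B}}_k}$ (normalized distances of the symbol-wise ML decoder and of the bit-wise max-log decoder under the zero-crossing approximation). The asymptotic loss of the code is $\mathsf{L}(\mathcal{B})=20\log_{10}\Big(\min_{\boldsymbol{x}\neq\hat{\boldsymbol{x}}\in\mathcal{X}}a^{\mathcal{X}}(\boldsymbol{x},\hat{\boldsymbol{x}})\big/\min_{\boldsymbol{x}\neq\hat{\boldsymbol{x}}\in\mathcal{X}}a^{\mathcal{B}}(\boldsymbol{x},\hat{\boldsymbol{x}})\Big)$ dB. *)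

From HB Require Import structures.
From mathcomp Require Import all_boot all_order all_algebra.
From mathcomp Require Import all_classical all_reals all_analysis.
Set Implicit Arguments. Unset Strict Implicit. Unset Printing Implicit Defensive.
Import Order.TTheory GRing.Theory Num.Theory.
Local Open Scope classical_set_scope.
Local Open Scope ring_scope.

Section Defs.
Variable R : realType.

(* 4-PAM constellation, 0-indexed: s_0 = -3d, s_1 = -d, s_2 = d, s_3 = 3d
   (the paper's s_1..s_4). *)
Definition pam (d : R) (i : nat) : R := (2 * i%:R - 3) * d.

Definition gray_labelings : seq (seq nat) :=
  [:: [:: 0; 1; 3; 2]; [:: 0; 2; 3; 1]; [:: 1; 0; 2; 3]; [:: 2; 0; 1; 3]]%N.

(* Labeling Phi_S: the bit pair [b1,b2] (b1 most significant) is mapped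
   to s_i where q_i = 2 b1 + b2. *)
Definition Phi (q : seq nat) (d : R) (b : bool * bool) : R :=
  pam d (index (2 * nat_of_bool b.1 + nat_of_bool b.2)%N q).

(* Codewords of B: length-N sequences of bit pairs b[k] = [b1[k], b2[k]]. *)
Definition codeword (N : nat) := {ffun 'I_N -> bool * bool}.

Definition binary_linear (N : nat) (B : {set codeword N}) : Prop :=
  [ffun => (false, false)] \in B /\
  forall c c', c \in B -> c' \in B ->
    [ffun k => (((c k).1 (+) (c' k).1), ((c k).2 (+) (c' k).2))] \in B.

Definition CMcode (N : nat) (q : seq nat) (d : R) (B : {set codeword N})
  : set ('I_N -> R) :=
  [set x | exists2 c, c \in B & x = fun k => Phi q d (c k)].

Definition sqdist (d : R) (u v : R) : R := (u - v) ^+ 2 / (4 * d ^+ 2).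

Definition extreme_pair (d : R) (u v : R) : bool :=
  ((u == pam d 0) && (v == pam d 3)) || ((u == pam d 3) && (v == pam d 0)).

Definition muX (d : R) (u v : R) : R := sqdist d u v.
Definition sigma2X (d : R) (u v : R) : R := sqdist d u v.
Definition muB (d : R) (u v : R) : R :=
  if extreme_pair d u v then 3 else sqdist d u v.
Definition sigma2B (d : R) (u v : R) : R :=
  if extreme_pair d u v then 1 else sqdist d u v.

Definition aX (N : nat) (d : R) (x xh : 'I_N -> R) : R :=
  (\sum_(k | x k != xh k) muX d (x k) (xh k)) /
    Num.sqrt (\sum_(k | x k != xh k) sigma2X d (x k) (xh k)).

Definition aB (N : nat) (d : R) (x xh : 'I_N -> R) : R :=
  (\sum_(k | x k != xh k) muB d (x k) (xh k)) /
    Num.sqrt (\sum_(k | x k != xh k) sigma2B d (x k) (xh k)).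

Definition min_dist (N : nat) (X : set ('I_N -> R))
  (a : ('I_N -> R) -> ('I_N -> R) -> R) : R :=
  inf [set r | exists x xh, [/\ X x, X xh, x <> xh & r = a x xh]].

Definition log10 (x : R) : R := ln x / ln 10.

Definition loss (N : nat) (q : seq nat) (d : R) (B : {set codeword N}) : R :=
  let X := CMcode q d B in
  20 * log10 (min_dist X (@aX N d) / min_dist X (@aB N d)).

End Defs.

From HB Require Import structures.
From mathcomp Require Import all_boot all_order all_algebra.
From mathcomp Require Import all_classical all_reals all_analysis.
From mathcomp Require Import ring lra.
Import Order.TTheory GRing.Theory Num.Theory.
Set Implicit Arguments. Unset Strict Implicit. Unset Printing Implicit Defensive.
Local Open Scope ring_scope.

(* Let w be the number of positions where {x[k], x'[k]} = {s_1, s_4} and S the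
   sum of the sigma^B.  Such a position contributes 9 = 1 + 8 to the symbol-wise
   sums and 3 = 1 + 2 to the bit-wise mean, so a^X = (S + 8w) / sqrt (S + 8w)
   and a^B = (S + 2w) / sqrt S; as (S + 2w)^2 <= S (S + 8w) when w <= S, we get
   a^B <= a^X pairwise.
   Conversely, a Gray labeling has a codeword z all of whose symbols are inner
   (s_2 or s_3): z = b''' or b'' for the two labelings where the inner labels
   share a bit, z = 0 for the other two.  For such z the squared distance of
   z[k] and z[k] + c[k] + c'[k] is exactly sigma^B(c[k], c'[k]) (for an extreme
   pair, adding 11 to an inner label gives the other inner label), so
   a^X(z, z + c + c') = S / sqrt S <= a^B(c, c').  Both minima therefore agree
   and the loss is 20 log10 1 = 0. *)

Definition bxor (a b : bool * bool) : bool * bool := (a.1 (+) b.1, a.2 (+) b.2).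

Definition label_index (q : seq nat) (b : bool * bool) : nat :=
  index (2 * nat_of_bool b.1 + nat_of_bool b.2)%N q.

Definition inner_label (q : seq nat) (b : bool * bool) : bool :=
  (label_index q b == 1)%N || (label_index q b == 2)%N.

Definition extreme_index (i j : nat) : bool :=
  ((i == 0) && (j == 3)) || ((i == 3) && (j == 0)).

(* The only use of the Gray property; checked by exhaustive evaluation. *)
Lemma gray_inner_bxor q u a a' : q \in gray_labelings -> inner_label q u ->
  let i := label_index q u in let j := label_index q (bxor (bxor u a) a') in
  let k := label_index q a in let l := label_index q a' in
  [&& (i == j) == (k == l)
    & `|i - j| ^ 2 == if extreme_index k l then 1 else `|k - l| ^ 2]%N.
Proof.
rewrite !inE => /or4P [] /eqP ->;
by case: a => [[] []]; case: a' => [[] []]; case: u => [[] []].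
Qed.

Lemma gray_inner_codeword N q (B : {set codeword N}) :
  q \in gray_labelings -> binary_linear B ->
  (exists2 b : codeword N, b \in B & forall k, (b k).1) ->
  (exists2 b : codeword N, b \in B & forall k, (b k).2) ->
  exists2 z : codeword N, z \in B & forall k, inner_label q (z k).
Proof.
move=> + [B0 _] [b2 b2B b2_1] [b3 b3B b3_2]; rewrite !inE => /or4P [] /eqP ->.
- by exists b3 => // k; rewrite /inner_label /label_index; case: (b3 k) (b3_2 k) => [[] []].
- by exists b2 => // k; rewrite /inner_label /label_index; case: (b2 k) (b2_1 k) => [[] []].
- by exists [ffun => (false, false)] => // k; rewrite ffunE.
- by exists [ffun => (false, false)] => // k; rewrite ffunE.
Qed.

Definition cw_add N (c c' : codeword N) : codeword N := [ffun k => bxor (c k) (c' k)].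

Lemma binary_linear_add N (B : {set codeword N}) c c' :
  binary_linear B -> c \in B -> c' \in B -> cw_add c c' \in B.
Proof. by move=> [_ B_add]; apply: B_add. Qed.

Lemma sqr_natrB (R : pzRingType) (i j : nat) : (i%:R - j%:R : R) ^+ 2 = (`|i - j| ^ 2)%N%:R.
Proof.
rewrite natrX; case: (leqP i j) => [ij|/ltnW ji].
  by rewrite distnEr // natrB // -sqrrN opprB.
by rewrite distnEl // natrB.
Qed.

Lemma divr_sqrt_le (F : rcfType) (S W : F) : 0 <= W <= S ->
  (S + 2 * W) / Num.sqrt S <= (S + 8 * W) / Num.sqrt (S + 8 * W).
Proof.
move=> /andP [W_ge0 W_le_S].
have [S0|S_neq0] := eqVneq S 0.
  have -> : W = 0 by apply/le_anti; rewrite W_ge0 -S0 W_le_S.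
  by rewrite S0 !mulr0 !addr0 sqrtr0 invr0 mulr0.
have S_gt0 : 0 < S by rewrite lt_neqAle eq_sym S_neq0 (le_trans W_ge0).
set a := Num.sqrt S; set b := Num.sqrt (S + 8 * W).
have a2 : a ^+ 2 = S by rewrite sqr_sqrtr ?ltW.
have b2 : b ^+ 2 = S + 8 * W by rewrite sqr_sqrtr //; lra.
have a_gt0 : 0 < a by rewrite sqrtr_gt0.
have b_gt0 : 0 < b by rewrite sqrtr_gt0; lra.
rewrite -b2 expr2 mulfK ?gt_eqF // ler_pdivrMr //.
have : (S + 2 * W) ^+ 2 <= (b * a) ^+ 2.
  have : 0 <= W * (S - W) by rewrite mulr_ge0 // subr_ge0.
  by rewrite exprMn a2 b2; nra.
by rewrite ler_sqr // ?nnegrE; [lra | rewrite mulr_ge0 ?ltW].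
Qed.

Lemma eq_inf_coinitial (R : realType) (A B : set R) : has_lbound A ->
  (forall b, B b -> exists2 a, A a & a <= b) ->
  (forall a, A a -> exists2 b, B b & b <= a) -> inf A = inf B.
Proof.
move=> [m Am] BA AB.
have Bm : lbound B m by move=> b /BA [a /Am ma ab]; exact: le_trans ab.
have [[a0 Aa0]|A0] := pselect (nonempty A); last first.
  have B0 : B = set0.
    by apply/seteqP; split=> // b /BA [a Aa _]; apply: A0; exists a.
  by rewrite B0 (_ : A = set0) //; apply/seteqP; split=> // a Aa; apply: A0; exists a.
have [b0 Bb0 _] := AB _ Aa0.
apply/le_anti/andP; split; apply: lb_le_inf.
- by exists b0.
- by move=> b /BA [a Aa ab]; apply: le_trans ab; apply: ge_inf => //; exists m.
- by exists a0.
- by move=> a /AB [b Bb ba]; apply: le_trans ba; apply: ge_inf => //; exists m.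
Qed.

(* Also for x = 0, where x / 0 = 0 and ln 0 = 0. *)
Lemma log10_divff (R : realType) (x : R) : log10 (x / x) = 0.
Proof.
have [->|x0] := eqVneq x 0; first by rewrite mul0r /log10 ln0 // mul0r.
by rewrite divff // /log10 ln1 mul0r.
Qed.

Section PAM.
Variables (R : realType) (d : R).
Hypothesis d_gt0 : 0 < d.

Lemma pam_inj : injective (pam d).
Proof.
have two_neq0 : (2 : R) != 0 by rewrite pnatr_eq0.
move=> i j /(mulIf (lt0r_neq0 d_gt0)) /addIr /(mulfI two_neq0) /eqP.
by rewrite eqr_nat => /eqP.
Qed.

Lemma sqdist_pam i j : sqdist d (pam d i) (pam d j) = (`|i - j| ^ 2)%N%:R.
Proof.
rewrite -sqr_natrB /sqdist /pam.
by field; rewrite gt_eqF.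
Qed.

Lemma extreme_pair_pam i j : extreme_pair d (pam d i) (pam d j) = extreme_index i j.
Proof. by rewrite /extreme_pair !(inj_eq pam_inj). Qed.

Lemma sqdist_ge0 u v : 0 <= sqdist d u v.
Proof. by rewrite /sqdist divr_ge0 ?sqr_ge0 // mulr_ge0 ?sqr_ge0. Qed.

Definition extreme_weight (u v : R) : R := (extreme_pair d u v)%:R.

Lemma muB_sigma2B u v : muB d u v = sigma2B d u v + 2 * extreme_weight u v.
Proof. by rewrite /muB /sigma2B /extreme_weight; case: ifP => _ /=; lra. Qed.

Lemma sqdist_sigma2B u v : sqdist d u v = sigma2B d u v + 8 * extreme_weight u v.
Proof.
rewrite /sigma2B /extreme_weight; case: ifP => [|_]; last by rewrite mulr0 addr0.
move=> /orP [] /andP [/eqP -> /eqP ->]; rewrite sqdist_pam -[(_ ^ 2)%N]/9%N /=; lra.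
Qed.

Lemma extreme_weight_ge0 u v : 0 <= extreme_weight u v.
Proof. exact: ler0n. Qed.

Lemma extreme_weight_le_sigma2B u v : extreme_weight u v <= sigma2B d u v.
Proof.
by rewrite /sigma2B /extreme_weight; case: ifP => // _; exact: sqdist_ge0.
Qed.

Lemma aB_le_aX N (x x' : 'I_N -> R) : aB d x x' <= aX d x x'.
Proof.
rewrite /aB /aX /muX /sigma2X.
under eq_bigr do rewrite muB_sigma2B.
under [X in _ <= X / _]eq_bigr do rewrite sqdist_sigma2B.
under [X in _ <= _ / Num.sqrt X]eq_bigr do rewrite sqdist_sigma2B.
rewrite !big_split /= -!mulr_sumr; apply: divr_sqrt_le.
by rewrite sumr_ge0 ?ler_sum // => k _; rewrite ?extreme_weight_ge0 ?extreme_weight_le_sigma2B.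
Qed.

Lemma aX_ge0 N (x x' : 'I_N -> R) : 0 <= aX d x x'.
Proof.
by rewrite /aX divr_ge0 ?sqrtr_ge0 // sumr_ge0 // => k _; exact: sqdist_ge0.
Qed.

Variable q : seq nat.
Hypothesis q_gray : q \in gray_labelings.

Lemma Phi_bxor_neq u a a' : inner_label q u ->
  (Phi q d u != Phi q d (bxor (bxor u a) a')) = (Phi q d a != Phi q d a').
Proof.
move=> /(gray_inner_bxor a a' q_gray) /andP [/eqP eq_same _].
by rewrite /Phi !(inj_eq pam_inj) -/(label_index _ _) eq_same.
Qed.

Lemma sqdist_Phi_bxor u a a' : inner_label q u ->
  sqdist d (Phi q d u) (Phi q d (bxor (bxor u a) a')) = sigma2B d (Phi q d a) (Phi q d a').
Proof.
move=> /(gray_inner_bxor a a' q_gray) /andP [_ /eqP eq_dist].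
rewrite /sigma2B /Phi extreme_pair_pam !sqdist_pam -!/(label_index _ _) eq_dist.
by case: ifP.
Qed.

Definition cmword N (c : codeword N) : 'I_N -> R := fun k => Phi q d (c k).

Lemma cmword_shift_neq N (z c c' : codeword N) : (forall k, inner_label q (z k)) ->
  cmword c <> cmword c' -> cmword z <> cmword (cw_add (cw_add z c) c').
Proof.
move=> z_inner c_neq zc_eq; apply: c_neq; apply: funext => k.
apply/eqP; rewrite -[_ == _]negbK -(Phi_bxor_neq _ _ (z_inner k)) negbK.
by have /eqP := congr1 (fun f => f k) zc_eq; rewrite /cmword !ffunE.
Qed.

Lemma aX_shift_le_aB N (z c c' : codeword N) : (forall k, inner_label q (z k)) ->
  aX d (cmword z) (cmword (cw_add (cw_add z c) c')) <= aB d (cmword c) (cmword c').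
Proof.
move=> z_inner; rewrite /aX /aB /muX /sigma2X /cmword.
under eq_bigl do rewrite !ffunE Phi_bxor_neq //.
under eq_bigr do rewrite !ffunE sqdist_Phi_bxor //.
rewrite ler_wpM2r ?invr_ge0 ?sqrtr_ge0 // ler_sum // => k _.
by rewrite muB_sigma2B lerDl mulr_ge0 ?extreme_weight_ge0.
Qed.

End PAM.

Theorem corollary2 (R : realType) (d : R) (N : nat) (q : seq nat)
  (B : {set codeword N}) :
  0 < d ->
  q \in gray_labelings ->
  binary_linear B ->
  (1 < #|B|)%N ->
  (exists2 b2 : codeword N, b2 \in B & forall k, (b2 k).1 = true) ->
  (exists2 b3 : codeword N, b3 \in B & forall k, (b3 k).2 = true) ->
  loss q d B = 0.
Proof.
move=> d_gt0 q_gray B_lin _ b2 b3.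
have [z zB z_inner] := gray_inner_codeword q_gray B_lin b2 b3.
suff min_aX_aB : min_dist (CMcode q d B) (@aX R N d) = min_dist (CMcode q d B) (@aB R N d).
  by rewrite /loss; cbv zeta; rewrite min_aX_aB log10_divff mulr0.
apply: eq_inf_coinitial.
- by exists 0 => _ [x [x' [_ _ _ ->]]]; exact: aX_ge0.
- move=> _ [_ [_ [[c cB ->] [c' c'B ->] c_neq ->]]].
  exists (aX d (cmword d q z) (cmword d q (cw_add (cw_add z c) c'))).
    exists (cmword d q z), (cmword d q (cw_add (cw_add z c) c')); split=> //.
    - by exists z.
    - by exists (cw_add (cw_add z c) c'); rewrite ?binary_linear_add.
    - exact: cmword_shift_neq.
  exact: aX_shift_le_aB.
- move=> _ [x [x' [Xx Xx' x_neq ->]]].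
  by exists (aB d x x'); [exists x, x' | exact: aB_le_aX].
Qed.
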